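(* Let $S$ be an AG-groupoid with a left identity. The following are equivalent: (i) every bi-ideal $B$ of $S$ is idempotent, i.e. $B^{2}=B$; (ii) $A\cap B=AB$ for all bi-ideals $A,B$ of $S$; (iii) the set $L_S$ of bi-ideals of $S$, with the operation $A\wedge B=AB$, is a semilattice (i.e. $\wedge$ is a well-defined operation on $L_S$ which is commutative, associative and idempotent).
   Context: An AG-groupoid is a set $S$ with a binary operation satisfying $(ab)c=(cb)a$ for all $a,b,c\in S$. A left identity is an element $e$ with $ea=a$ for all $a\in S$. For nonempty subsets, $AB=\{ab:a\in A,b\in B\}$, $B^{2}=BB$. A bi-ideal of $S$ is a nonempty subset $B$ with $BB\subseteq B$ and $(BS)B\subseteq B$. *)

Definition AG_groupoid {S : Type} (op : S -> S -> S) : Prop :=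
  forall a b c : S, op (op a b) c = op (op c b) a.

Definition left_identity {S : Type} (op : S -> S -> S) (e : S) : Prop :=
  forall a : S, op e a = a.

Definition subset {S : Type} (A B : S -> Prop) : Prop :=
  forall x, A x -> B x.

Definition set_eq {S : Type} (A B : S -> Prop) : Prop :=
  forall x, A x <-> B x.

Definition set_inter {S : Type} (A B : S -> Prop) : S -> Prop :=
  fun x => A x /\ B x.

Definition setT {S : Type} : S -> Prop := fun _ => True.

Definition setmul {S : Type} (op : S -> S -> S) (A B : S -> Prop) : S -> Prop :=
  fun x => exists a b, A a /\ B b /\ x = op a b.

Definition bi_ideal {S : Type} (op : S -> S -> S) (B : S -> Prop) : Prop :=
  (exists x, B x) /\
  subset (setmul op B B) B /\
  subset (setmul op (setmul op B setT) B) B.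

From Stdlib Require Import Setoid.

(* In an AG-groupoid the medial law (ab)(cd) = (ac)(bd) holds,
   and with a left identity e also a(xy) = x(ay).  The heart of the argument
   is that an idempotent bi-ideal B is a left ideal: writing b = (cd)b' with
   c, d, b' in B (idempotency used twice), s b = (cd)(sb') = ((sb')d)c lies
   in (SB)B, and (SB)B ⊆ B because (s(b1 b2))b' = (b1(s b2))b' ∈ (BS)B.
   Consequently, for idempotent bi-ideals A and B, AB ⊆ A ∩ B; conversely
   A ∩ B (a bi-ideal when nonempty) is idempotent, so A ∩ B ⊆ AB.  This
   gives (i) ⇒ (ii); (ii) ⇒ (i) takes A = B.  For (ii) ⇒ (iii), products of
   bi-ideals are intersections, hence bi-ideals, and commutativity,
   associativity and idempotency of ∧ are those of ∩; (iii) ⇒ (i) is the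
   idempotency clause. *)

Definition idempotent {S : Type} (op : S -> S -> S) (B : S -> Prop) : Prop :=
  set_eq (setmul op B B) B.

Section AGGroupoid.
Variable (S : Type) (op : S -> S -> S).
Hypothesis hAG : AG_groupoid op.

Lemma bi_ideal_set_eq A B : set_eq A B -> bi_ideal op A -> bi_ideal op B.
Proof.
  intros AB [[x Ax] [AA_A ASA_A]]. split; [exists x; apply AB; exact Ax | split].
  - intros z (a & b & Ba & Bb' & ->). apply AB, AA_A.
    exists a, b. repeat split; apply AB; assumption.
  - intros z (u & b & (a & s & Ba & _ & ->) & Bb' & ->). apply AB, ASA_A.
    exists (op a s), b. repeat split; [exists a, s; repeat split | ];
      apply AB; assumption.
Qed.

Lemma bi_ideal_inter A B : bi_ideal op A -> bi_ideal op B ->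
  (exists x, A x /\ B x) -> bi_ideal op (set_inter A B).
Proof.
  intros [_ [AA_A ASA_A]] [_ [BB_B BSB_B]] meet. split; [exact meet | split].
  - intros z (a & b & [Aa Ba] & [Ab Bb] & ->). split.
    + apply AA_A. exists a, b. auto.
    + apply BB_B. exists a, b. auto.
  - intros z (u & b & (a & s & [Aa Ba] & _ & ->) & [Ab Bb] & ->). split.
    + apply ASA_A. exists (op a s), b. split; [exists a, s |]; easy.
    + apply BSB_B. exists (op a s), b. split; [exists a, s |]; easy.
Qed.

Lemma medial a b c d : op (op a b) (op c d) = op (op a c) (op b d).
Proof. rewrite hAG, (hAG c d b), hAG. reflexivity. Qed.

Variable e : S.
Hypothesis he : left_identity op e.

Lemma left_permute a x y : op a (op x y) = op x (op a y).
Proof.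
  transitivity (op (op e a) (op x y)); [rewrite he; reflexivity |].
  rewrite medial, he. reflexivity.
Qed.

(* An idempotent bi-ideal satisfies (SB)B ⊆ B: writing b = b1 b2, the
   element (s(b1 b2))b' equals (b1(s b2))b', which lies in (BS)B. *)
Lemma idempotent_bi_ideal_SBB B : bi_ideal op B -> idempotent op B ->
  forall s b b', B b -> B b' -> B (op (op s b) b').
Proof.
  intros [_ [_ BSB_B]] idem s b b' Bb Bb'. apply idem in Bb.
  destruct Bb as (b1 & b2 & Bb1 & Bb2 & ->).
  rewrite left_permute. apply BSB_B.
  exists (op b1 (op s b2)), b'. split; [exists b1, (op s b2) |]; easy.
Qed.

Lemma idempotent_bi_ideal_left_ideal B : bi_ideal op B -> idempotent op B ->
  forall s b, B b -> B (op s b).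
Proof.
  intros HB idem s b Bb. apply idem in Bb.
  destruct Bb as (c' & b' & Bc' & Bb' & ->). apply idem in Bc'.
  destruct Bc' as (c & d & Bc & Bd & ->).
  (* s((cd)b') = (cd)(sb') = ((sb')d)c *)
  rewrite left_permute, hAG. apply idempotent_bi_ideal_SBB; assumption.
Qed.

Lemma setmul_sub_inter A B :
  bi_ideal op A -> idempotent op A -> bi_ideal op B -> idempotent op B ->
  subset (setmul op A B) (set_inter A B).
Proof.
  intros HA idemA HB idemB z (a & b & Aa & Bb & ->). split.
  - (* (a1 a2) b = (b a2) a1 *)
    apply idemA in Aa. destruct Aa as (a1 & a2 & Aa1 & Aa2 & ->).
    rewrite hAG. apply idempotent_bi_ideal_left_ideal; assumption.
  - apply idempotent_bi_ideal_left_ideal; assumption.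
Qed.

Lemma idempotent_inter_eq_product :
  (forall B, bi_ideal op B -> idempotent op B) ->
  forall A B, bi_ideal op A -> bi_ideal op B ->
    set_eq (set_inter A B) (setmul op A B).
Proof.
  intros idem A B HA HB x. split.
  - intros [Ax Bx].
    assert (HAB : bi_ideal op (set_inter A B))
      by (apply bi_ideal_inter; [exact HA | exact HB | exists x; auto]).
    assert (ABx : set_inter A B x) by (split; assumption).
    apply (idem _ HAB) in ABx.
    destruct ABx as (a & b & [Aa _] & [_ Bb] & ->). exists a, b. auto.
  - apply setmul_sub_inter; auto.
Qed.

End AGGroupoid.

Lemma inter_eq_product_idempotent {S : Type} (op : S -> S -> S) :
  (forall A B, bi_ideal op A -> bi_ideal op B ->
     set_eq (set_inter A B) (setmul op A B)) ->
  forall B, bi_ideal op B -> idempotent op B.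
Proof.
  intros inter_eq B HB x. rewrite <- (inter_eq B B HB HB x).
  unfold set_inter. tauto.
Qed.

(* (ii) ⇒ closure of (iii): a product of bi-ideals is their intersection,
   which is nonempty since it contains ab. *)
Lemma inter_eq_product_closed {S : Type} (op : S -> S -> S) :
  (forall A B, bi_ideal op A -> bi_ideal op B ->
     set_eq (set_inter A B) (setmul op A B)) ->
  forall A B, bi_ideal op A -> bi_ideal op B -> bi_ideal op (setmul op A B).
Proof.
  intros inter_eq A B HA HB.
  apply (bi_ideal_set_eq S op (set_inter A B)); [exact (inter_eq A B HA HB) |].
  apply bi_ideal_inter; [exact HA | exact HB |].
  pose proof HA as [[a Aa] _]. pose proof HB as [[b Bb] _].
  exists (op a b). apply (inter_eq A B HA HB). exists a, b. auto.
Qed.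

Theorem proposition3 (S : Type) (op : S -> S -> S)
  (hAG : AG_groupoid op) (hle : exists e : S, left_identity op e) :
  let P1 := forall B, bi_ideal op B -> set_eq (setmul op B B) B in
  let P2 := forall A B, bi_ideal op A -> bi_ideal op B ->
              set_eq (set_inter A B) (setmul op A B) in
  let P3 :=
    (* closure: /\ is a well-defined operation on L_S *)
    (forall A B, bi_ideal op A -> bi_ideal op B -> bi_ideal op (setmul op A B)) /\
    (* commutative *)
    (forall A B, bi_ideal op A -> bi_ideal op B ->
       set_eq (setmul op A B) (setmul op B A)) /\
    (* associative *)
    (forall A B C, bi_ideal op A -> bi_ideal op B -> bi_ideal op C ->
       set_eq (setmul op (setmul op A B) C) (setmul op A (setmul op B C))) /\
    (* idempotent *)
    (forall A, bi_ideal op A -> set_eq (setmul op A A) A) in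
  (P1 <-> P2) /\ (P2 <-> P3).
Proof.
  destruct hle as [e he]. intros P1 P2 P3.
  assert (i_ii : P1 -> P2) by exact (idempotent_inter_eq_product S op hAG e he).
  assert (ii_i : P2 -> P1) by exact (inter_eq_product_idempotent op).
  split; [tauto | split].
  - intros inter_eq.
    pose proof (inter_eq_product_closed op inter_eq) as closed.
    split; [exact closed | split; [| split]].
    + (* AB = A ∩ B = B ∩ A = BA *)
      intros A B HA HB x.
      rewrite <- (inter_eq A B HA HB x), <- (inter_eq B A HB HA x).
      unfold set_inter. tauto.
    + (* (AB)C = A ∩ B ∩ C = A(BC) *)
      intros A B C HA HB HC x.
      rewrite <- (inter_eq _ C (closed A B HA HB) HC x),
              <- (inter_eq A _ HA (closed B C HB HC) x).
      pose proof (inter_eq A B HA HB x). pose proof (inter_eq B C HB HC x).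
      unfold set_inter in *. tauto.
    + exact (ii_i inter_eq).
  - intros (_ & _ & _ & idem). exact (i_ii idem).
Qed.
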